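(* Let $I\subseteq\mathbb{R}$ be an interval, let $f:I\to\mathbb{R}$ be differentiable on the interior $I^\circ$ of $I$, and let $a,b\in I$ with $a<b$ and $f'\in L^1[a,b]$. Let $s\in(0,1]$, $\alpha\in[0,1]$, $m\in(0,1]$, assume $b/m\in I^\circ$, and let $p>1$ and $q=\frac{p}{p-1}$. If $|f'|^q$ is $s$-$(\alpha,m)$-convex (in the first sense) on $[a,b]$, then $$\left|\frac{f(a)+f(b)}{2}-\frac{1}{b-a}\int_a^b f(x)\,dx\right|\le \frac{b-a}{2(p+1)^{1/p}}\left[\frac{|f'(a)|^q+m\alpha s\left|f'\!\left(\frac{b}{m}\right)\right|^q}{\alpha s+1}\right]^{1/q}.$$
   Context: Let $s\in(0,1]$, $\alpha\in[0,1]$, $m\in(0,1]$. A nonnegative function $g$ is called $s$-$(\alpha,m)$-convex (in the first sense) on $[a,b]$ if for all $x,y\in[a,b]$ (with $y/m$ in the domain of $g$) and all $t\in[0,1]$, $$g(tx+(1-t)y)\le t^{\alpha s}g(x)+m\,(1-t^{\alpha s})\,g\!\left(\frac{y}{m}\right).$$ *)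

From HB Require Import structures.
From mathcomp Require Import all_boot all_order all_algebra.
From mathcomp Require Import all_classical all_reals all_analysis.
Set Implicit Arguments. Unset Strict Implicit. Unset Printing Implicit Defensive.
Import Order.TTheory GRing.Theory Num.Theory.
Import numFieldNormedType.Exports.
Local Open Scope classical_set_scope.
Local Open Scope ring_scope.

Definition s_alpha_m_convex (R : realType) (s alpha m : R) (D : set R)
    (g : R -> R) (a b : R) : Prop :=
  (forall x, D x -> 0 <= g x) /\
  (forall x y t : R, a <= x <= b -> a <= y <= b -> D (y / m) -> 0 <= t <= 1 ->
     g (t * x + (1 - t) * y)
       <= t `^ (alpha * s) * g x + m * (1 - t `^ (alpha * s)) * g (y / m)).

(* With c the midpoint of [a, b], the function g x = (x - c) f x - \int_a^x f
   has derivative (x - c) f' x, and g b - g a is (b - a) times the trapezoid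
   error.  Hence the error is bounded by K b - K a for any K whose derivative
   dominates |(x - c) f' x|; the proof never integrates f'.  If |f'|^q <= G,
   the weighted Young inequality gives such a derivative,
   l^p |x - c|^p / p + G x / (l^q q) for every l > 0, and both terms have
   explicit primitives.  Minimizing over l turns the bound into Hoelder's
   bound P^(1/p) Q^(1/q), with P = \int_a^b |x - c|^p and Q = \int_a^b G.
   Finally s-(alpha,m)-convexity of |f'|^q along the segment from a to b
   provides the envelope G x = m |f'(b/m)|^q + (|f'(a)|^q - m |f'(b/m)|^q) t^(alpha s)
   with t = (b - x) / (b - a), whose mean over [a, b] is the bracket of the
   theorem. *)
From HB Require Import structures.
From mathcomp Require Import all_boot all_order all_algebra.
From mathcomp Require Import all_classical all_reals all_analysis.
From mathcomp Require Import ring lra.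
Import Order.TTheory GRing.Theory Num.Theory.
Import numFieldNormedType.Exports.
Local Open Scope classical_set_scope.
Local Open Scope ring_scope.

Section primitives.
Context {R : realType}.
Implicit Types (e x y : R).

Lemma is_derive1_comp {g h : R -> R} {x dg dh : R} :
  is_derive x 1 g dg -> is_derive (g x) 1 h dh -> is_derive x 1 (h \o g) (dh * dg).
Proof.
move=> gx hgx; have dgx : derivable g x 1 by case: gx.
have dhgx : derivable h (g x) 1 by case: hgx.
split; first by apply/derivable1_diffP/differentiable_comp; exact/derivable1_diffP.
by rewrite -derive1E derive1_comp // !derive1E !derive_val.
Qed.

(* [powR y e = 1] for [y < 0], so [powR] is not continuous at [0] from the
   left; truncating the base at [0] gives a globally continuous power. *)
Definition pospow e y : R := Num.max y 0 `^ e.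

Lemma pospowE e y : 0 <= y -> pospow e y = y `^ e.
Proof. by move=> y0; rewrite /pospow max_l. Qed.

Lemma pospow_le0 e y : 0 < e -> y <= 0 -> pospow e y = 0.
Proof. by move=> e0 y0; rewrite /pospow max_r // powR0 // gt_eqF. Qed.

Lemma is_derive_pospow e {y} : 0 < y -> is_derive y 1 (pospow e) (e * y `^ (e - 1)).
Proof.
move=> y0; apply: (near_eq_is_derive _ (is_derive1_powR e y0)).
by near=> z; rewrite pospowE // ltW //; near: z; exact: lt_nbhsr.
Unshelve. all: by end_near. Qed.

Lemma is_derive_pospow_lt0 {e y} : 0 < e -> y < 0 -> is_derive y 1 (pospow e) 0.
Proof.
move=> e0 y0; apply: (near_eq_is_derive _ (is_derive_cst 0 y 1)).
by near=> z; rewrite pospow_le0 // ltW //; near: z; exact: lt_nbhsl.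
Unshelve. all: by end_near. Qed.

Lemma continuous_pospow {e} : 0 < e -> continuous (pospow e).
Proof.
move=> e0 y; have [y0|y0] := ltP 0 y.
  by apply/differentiable_continuous/derivable1_diffP; case: (is_derive_pospow e y0).
rewrite /continuous_at pospow_le0 //; apply/cvgrPdist_lt => eps eps0.
pose d := (eps / 2) `^ e^-1.
have d0 : 0 < d by rewrite powR_gt0 // divr_gt0.
near=> z; rewrite sub0r normrN /pospow ger0_norm ?powR_ge0 //.
have zd : Num.max z 0 <= d.
  rewrite ge_max (ltW d0) andbT.
  have : ball y d z by near: z; exact: (@near_ball _ _ y d d0).
  rewrite /ball /=; have := ler_norm (z - y); rewrite distrC; lra.
apply: (le_lt_trans (ge0_ler_powR (ltW e0) _ _ zd)).
- by rewrite nnegrE le_max lexx orbT.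
- by rewrite nnegrE ltW.
rewrite -powRrM mulVf ?gt_eqF // powRr1 ?divr_ge0 ?ltW //.
by rewrite ltr_pdivrMr // ltr_pMr // ltr1n.
Unshelve. all: by end_near. Qed.

Definition signpow e y : R := pospow e y - pospow e (- y).

Lemma signpowE e y : 0 < e -> signpow e y = Num.sg y * `|y| `^ e.
Proof.
move=> e0; rewrite /signpow; have [y0|y0|->] := ltgtP y 0.
- rewrite pospow_le0 ?ltW // pospowE ?oppr_ge0 ?ltW // ltr0_sg // ltr0_norm //.
  by rewrite sub0r mulN1r.
- by rewrite pospowE ?ltW // pospow_le0 ?oppr_le0 ?ltW // gtr0_sg // gtr0_norm // subr0 mul1r.
- by rewrite oppr0 subrr sgr0 mul0r.
Qed.

Lemma continuous_signpow {e} : 0 < e -> continuous (signpow e).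
Proof.
move=> e0 y; apply: continuousB; first exact: continuous_pospow.
apply: (@continuous_comp _ _ _ -%R (pospow e)); first exact: continuousN (@cvg_id _ _).
exact: continuous_pospow.
Qed.

Lemma is_derive_signpow {e y} : 0 < e -> y != 0 ->
  is_derive y 1 (signpow (e + 1)) ((e + 1) * `|y| `^ e).
Proof.
move=> e0 y0; have e10 : 0 < e + 1 by rewrite addr_gt0.
have Ny := is_deriveNid y (1 : R).
have [yn|yp] := ltP y 0.
  have yN : 0 < - y by rewrite oppr_gt0.
  have h : is_derive y 1 (signpow (e + 1)) _ := is_deriveB (is_derive_pospow_lt0 e10 yn)
    (is_derive1_comp Ny (is_derive_pospow (e + 1) yN)).
  apply: (is_derive_eq h); rewrite ltr0_norm // addrK.
  by rewrite sub0r mulrN1 opprK.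
have {}yp : 0 < y by rewrite lt_def y0.
have yN : - y < 0 by rewrite oppr_lt0.
have h : is_derive y 1 (signpow (e + 1)) _ := is_deriveB (is_derive_pospow (e + 1) yp)
  (is_derive1_comp Ny (is_derive_pospow_lt0 e10 yN)).
by apply: (is_derive_eq h); rewrite gtr0_norm // addrK mul0r subr0.
Qed.

Lemma is_derive_segment_coord (a b x : R) :
  is_derive x 1 (fun y : R => (b - y) / (b - a)) (- (b - a)^-1).
Proof.
have h : is_derive x 1 (fun y : R => (b - y) / (b - a)) _ :=
  is_deriveM (is_deriveB (is_derive_cst b x 1) (is_derive_id x 1))
    (is_derive_cst (b - a)^-1 x 1).
by apply: (is_derive_eq h); rewrite /GRing.scale /= mulr0 add0r sub0r mulrN1.
Qed.

(* A primitive of the envelope [beta + gamma * t ^ r], where [t = (b - x) / (b - a)]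
   runs from [1] at [a] down to [0] at [b]. *)
Definition envelope_primitive (beta gamma r a b x : R) : R :=
  beta * x - gamma * (b - a) / (r + 1) * pospow (r + 1) ((b - x) / (b - a)).

Lemma continuous_envelope_primitive (beta gamma r a b : R) :
  0 <= r -> continuous (envelope_primitive beta gamma r a b).
Proof.
move=> r0 x; have r10 : 0 < r + 1 by rewrite ltr_wpDl.
have ct : {for x, continuous (fun y : R => (b - y) / (b - a))}.
  apply/differentiable_continuous/derivable1_diffP.
  by case: (is_derive_segment_coord a b x).
have cp := continuous_comp ct (continuous_pospow r10 _).
have cl : {for x, continuous (fun y : R => beta * y)}.
  exact: continuousZl_tmp (@cvg_id _ _).
have h : {for x, continuous (envelope_primitive beta gamma r a b)} :=
  continuousB cl (continuousZl_tmp (k := gamma * (b - a) / (r + 1)) cp).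
exact: h.
Qed.

Lemma is_derive_envelope_primitive (beta gamma r a b x : R) :
  0 <= r -> a < b -> x < b ->
  is_derive x 1 (envelope_primitive beta gamma r a b)
    (beta + gamma * ((b - x) / (b - a)) `^ r).
Proof.
move=> r0 ab xb; have r10 : 0 < r + 1 by rewrite ltr_wpDl.
have t0 : 0 < (b - x) / (b - a) by rewrite divr_gt0 // subr_gt0.
have h : is_derive x 1 (envelope_primitive beta gamma r a b) _ :=
  is_deriveB (is_deriveZ beta (is_derive_id x 1))
    (is_deriveZ (gamma * (b - a) / (r + 1))
       (is_derive1_comp (is_derive_segment_coord a b x) (is_derive_pospow (r + 1) t0))).
apply: (is_derive_eq h); rewrite /GRing.scale /= addrK mulr1.
by field; rewrite !gt_eqF ?subr_gt0.
Qed.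

Lemma envelope_primitive_increment (beta gamma r a b : R) : 0 <= r -> a < b ->
  envelope_primitive beta gamma r a b b - envelope_primitive beta gamma r a b a =
    (b - a) * (beta + gamma / (r + 1)).
Proof.
move=> r0 ab; have r10 : 0 < r + 1 by rewrite ltr_wpDl.
rewrite /envelope_primitive subrr mul0r pospow_le0 // divff ?gt_eqF ?subr_gt0 //.
by rewrite pospowE // powR1; field; rewrite gt_eqF.
Qed.

End primitives.

Section young.
Context {R : realType}.
Implicit Types (x p q r : R).

Lemma powRV x r : 0 <= x -> x^-1 `^ r = (x `^ r)^-1.
Proof. by move=> x0; rewrite -powR_inv1 // -powRrM mulN1r powRN. Qed.

Lemma powR_conjugate_split {x p q} : 0 <= x -> 0 < p -> 0 < q -> p^-1 + q^-1 = 1 ->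
  x = x `^ p^-1 * x `^ q^-1.
Proof.
move=> x0 p0 q0 pq; have [->|xn0] := eqVneq x 0.
  by rewrite powR0 ?mul0r ?invr_eq0 ?gt_eqF.
by rewrite -powRD ?xn0 ?implybT // pq powRr1.
Qed.

Lemma conjugate_powR_scaled {u w G l p q : R} : 0 <= u -> 0 <= w -> 0 < l ->
  0 < p -> 0 < q -> p^-1 + q^-1 = 1 -> w `^ q <= G ->
  u * w <= l `^ p * u `^ p / p + G / (l `^ q * q).
Proof.
move=> u0 w0 l0 p0 q0 pq wG.
have -> : u * w = (l * u) * (w / l) by field; rewrite gt_eqF.
apply: le_trans (conjugate_powR (mulr_ge0 (ltW l0) u0) (divr_ge0 w0 (ltW l0)) p0 q0 pq) _.
rewrite powRM ?(ltW l0) // powRM ?invr_ge0 ?(ltW l0) // powRV ?(ltW l0) //.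
rewrite lerD2l invfM mulrA.
by apply: ler_wpM2r; [rewrite invr_ge0 ltW | apply: ler_wpM2r; rewrite ?invr_ge0 ?powR_ge0].
Qed.

(* The infimum over [l > 0] of the right-hand side is [P^(1/p) Q^(1/q)]; for [Q > 0]
   it is attained at [l = (Q / P)^(1/(p q))], which balances the two terms. *)
Lemma ler_young_inf {X P Q p q : R} : 0 < p -> 0 < q -> p^-1 + q^-1 = 1 ->
  0 < P -> 0 <= Q ->
  (forall l, 0 < l -> X <= l `^ p * P / p + Q / (l `^ q * q)) ->
  X <= P `^ p^-1 * Q `^ q^-1.
Proof.
move=> p0 q0 pq P0 Q0 XPQ; have [Qe0|Qn0] := eqVneq Q 0.
  rewrite Qe0 powR0 ?invr_eq0 ?gt_eqF // mulr0; apply/ler_addgt0Pr => e e0.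
  have l0 : 0 < (e * p / P) `^ p^-1 by rewrite powR_gt0 // !mulr_gt0 ?invr_gt0.
  apply: le_trans (XPQ _ l0) _; rewrite -powRrM mulVf ?gt_eqF // powRr1; last first.
    by rewrite ltW // !mulr_gt0 ?invr_gt0.
  rewrite Qe0 mul0r addr0 add0r le_eqVlt; apply/orP; left; apply/eqP.
  by field; rewrite !gt_eqF.
have {}Q0 : 0 < Q by rewrite lt_def Qn0.
pose l := (Q / P) `^ (p * q)^-1.
have l0 : 0 < l by rewrite powR_gt0 // divr_gt0.
apply: le_trans (XPQ l l0) _.
have lp : l `^ p * P = P `^ p^-1 * Q `^ q^-1.
  rewrite -powRrM; have -> : (p * q)^-1 * p = q^-1 by field; rewrite !gt_eqF.
  rewrite powRM ?invr_ge0 ?ltW // powRV ?ltW //.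
  rewrite [X in _ * X = _](powR_conjugate_split (ltW P0) p0 q0 pq); field.
  by rewrite gt_eqF // powR_gt0.
have lq : Q / l `^ q = P `^ p^-1 * Q `^ q^-1.
  rewrite -powRrM; have -> : (p * q)^-1 * q = p^-1 by field; rewrite !gt_eqF.
  rewrite powRM ?invr_ge0 ?ltW // powRV ?ltW //.
  rewrite [X in X / _ = _](powR_conjugate_split (ltW Q0) p0 q0 pq); field.
  by rewrite !gt_eqF // powR_gt0.
by rewrite invfM mulrA lp lq -mulrDr pq mulr1.
Qed.

Lemma midpoint_hoelder_constant {L Q p q : R} :
  0 < L -> 0 <= Q -> 0 < p -> 0 < q -> p^-1 + q^-1 = 1 ->
  (2 * (L / 2) `^ (p + 1) / (p + 1)) `^ p^-1 * Q `^ q^-1 =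
    L / (2 * (p + 1) `^ p^-1) * (Q / L) `^ q^-1 * L.
Proof.
move=> L0 Q0 p0 q0 pq.
have L20 : 0 < L / 2 by rewrite divr_gt0.
have p10 : 0 < p + 1 by rewrite addr_gt0.
have hP : (2 * (L / 2) `^ (p + 1) / (p + 1)) `^ p^-1 = L / 2 * L `^ p^-1 / (p + 1) `^ p^-1.
  rewrite powRD ?(gt_eqF L20) ?implybT // powRr1 ?ltW //.
  have -> : 2 * ((L / 2) `^ p * (L / 2)) / (p + 1) = (L / 2) `^ p * (L / (p + 1)).
    by field; rewrite gt_eqF.
  rewrite powRM ?powR_ge0 ?divr_ge0 ?ltW // -powRrM mulfV ?gt_eqF // powRr1 ?ltW //.
  by rewrite powRM ?invr_ge0 ?ltW // powRV ?ltW // mulrA.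
have hQ : Q `^ q^-1 = L `^ q^-1 * (Q / L) `^ q^-1.
  by rewrite -powRM ?(ltW L0) ?divr_ge0 ?(ltW L0) // mulrC divfK ?gt_eqF.
rewrite hP hQ [X in _ = _ * X](powR_conjugate_split (ltW L0) p0 q0 pq).
by field; rewrite !gt_eqF ?powR_gt0.
Qed.

End young.

Section trapezoid.
Context {R : realType}.

Lemma norm_increment_le_derive {g K dg k : R -> R} {u v : R} : u <= v ->
  (forall x, x \in `]u, v[ -> is_derive x 1 g (dg x)) ->
  (forall x, x \in `]u, v[ -> is_derive x 1 K (k x)) ->
  {within `[u, v], continuous g} -> {within `[u, v], continuous K} ->
  (forall x, x \in `]u, v[ -> `|dg x| <= k x) ->
  `|g v - g u| <= K v - K u.
Proof.
move=> uv gx Kx cg cK dgk.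
have gsK s x : x \in `]u, v[ -> is_derive x 1 (g + s \*: K) (dg x + s * k x).
  by move=> xuv; exact: is_deriveD (gx x xuv) (is_deriveZ s (Kx x xuv)).
have dgsK s x : x \in `]u, v[ -> derivable (g + s \*: K) x 1.
  by move=> xuv; case: (gsK s x xuv).
have cgsK s : {within `[u, v], continuous (g + s \*: K)}.
  by move=> x; apply: continuousD; [exact: cg | apply: continuousZl_tmp; exact: cK].
have g'sK s x : x \in `]u, v[ -> derive1 (g + s \*: K) x = dg x + s * k x.
  by move=> xuv; rewrite derive1E; exact: (@derive_val _ _ _ _ _ _ _ (gsK s x xuv)).
have gNK : g v + (-1) * K v <= g u + (-1) * K u.
  apply: (ler0_derive1_nincr (dgsK (-1)) _ (cgsK (-1))) => // x xuv.
  rewrite g'sK // mulN1r subr_le0; exact: le_trans (ler_norm _) (dgk x xuv).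
have gK : g u + 1 * K u <= g v + 1 * K v.
  apply: (ger0_derive1_ndecr (dgsK 1) _ (cgsK 1)) => // x xuv.
  rewrite g'sK // mul1r; have := dgk x xuv; have := ler_norm (- dg x).
  rewrite normrN; lra.
by rewrite ler_norml; apply/andP; split; lra.
Qed.

Lemma is_derive_integral_itv {f : R -> R} {a b x : R} :
  lebesgue_measure.-integrable `[a, b] (EFin \o f) -> x \in `]a, b[ ->
  {for x, continuous f} ->
  is_derive x 1 (fun y => \int[lebesgue_measure]_(t in `[a, y]) f t) (f x).
Proof.
move=> intf xab fxc; have xb : x < b by rewrite (itvP xab).
have ax : (BLeft a < BRight x)%E by rewrite /Order.lt /= (itvP xab).
have [dF F'x] := @continuous_FTC1 R f (BLeft a) x b xb intf ax fxc.
by apply: DeriveDef => //; rewrite -derive1E.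
Qed.

Lemma trapezoid_error_le {f df K k : R -> R} {a b : R} : a < b ->
  (forall x, x \in `]a, b[ -> is_derive x 1 f (df x)) ->
  {within `[a, b], continuous f} ->
  (forall x, x \in `]a, b[ -> x != (a + b) / 2 -> is_derive x 1 K (k x)) ->
  {within `[a, b], continuous K} ->
  (forall x, x \in `]a, b[ -> x != (a + b) / 2 -> `|(x - (a + b) / 2) * df x| <= k x) ->
  `|(b - a) / 2 * (f a + f b) - \int[lebesgue_measure]_(x in `[a, b]) f x| <= K b - K a.
Proof.
move=> ab fx cf Kx cK dfk; set c := (a + b) / 2.
have [ac cb] : a < c /\ c < b by split; rewrite /c; lra.
have intf : lebesgue_measure.-integrable `[a, b] (EFin \o f).
  exact: continuous_compact_integrable (@segment_compact _ a b) cf.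
pose F x := \int[lebesgue_measure]_(t in `[a, x]) f t.
have Fx x : x \in `]a, b[ -> is_derive x 1 F (f x).
  move=> xab; have fxc : {for x, continuous f}.
    by apply/differentiable_continuous/derivable1_diffP; case: (fx x xab).
  exact: is_derive_integral_itv intf xab fxc.
have xc (x : R) : is_derive x 1 (fun y : R => y - c) 1.
  have h := is_deriveB (is_derive_id x (1:R)) (is_derive_cst c x (1:R)).
  by apply: (is_derive_eq h); rewrite subr0.
pose g := (fun y : R => y - c) \* f - F.
have gx x : x \in `]a, b[ -> is_derive x 1 g ((x - c) * df x).
  move=> xab; have h := is_deriveB (is_deriveM (xc x) (fx x xab)) (Fx x xab).
  by apply: (is_derive_eq h); rewrite /GRing.scale /=; ring.
have cg : {within `[a, b], continuous g}.
  rewrite /g => x; apply: continuousB.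
    apply: continuousM (cf x); apply: continuous_subspaceT => {}x.
    by apply/differentiable_continuous/derivable1_diffP; case: (xc x).
  exact: parameterized_integral_continuous (ltW ab) intf x.
have gba : g b - g a = (b - a) / 2 * (f a + f b) - \int[lebesgue_measure]_(x in `[a, b]) f x.
  have gE y : g y = (y - c) * f y - F y by [].
  by rewrite !gE /F set_itv1 Rintegral_set1 /c; field.
clearbody g.
have sub u v : a <= u -> v <= b -> `[u, v] `<=` `[a, b].
  by move=> au vb y; rewrite /= !in_itv /= => /andP[? ?]; apply/andP; split; lra.
have piece u v : a <= u -> u <= v -> v <= b ->
    (forall x, x \in `]u, v[ -> (x \in `]a, b[) /\ x != c) ->
    `|g v - g u| <= K v - K u.
  move=> au uv vb inside.
  have gx' x : x \in `]u, v[ -> is_derive x 1 g ((x - c) * df x).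
    by move=> /inside[xab _]; exact: gx.
  have Kx' x : x \in `]u, v[ -> is_derive x 1 K (k x).
    by move=> /inside[xab xnc]; exact: Kx.
  have dfk' x : x \in `]u, v[ -> `|(x - c) * df x| <= k x.
    by move=> /inside[xab xnc]; exact: dfk.
  exact: (norm_increment_le_derive uv gx' Kx' (continuous_subspaceW (sub _ _ au vb) cg)
    (continuous_subspaceW (sub _ _ au vb) cK) dfk').
have gac := piece a c (lexx a) (ltW ac) (ltW cb).
have gcb := piece c b (ltW ac) (ltW cb) (lexx b).
rewrite -gba (_ : g b - g a = (g b - g c) + (g c - g a)); last by ring.
apply: le_trans (ler_normD _ _) _.
have -> : K b - K a = (K b - K c) + (K c - K a) by ring.
apply: lerD; [apply: gcb | apply: gac] => x; rewrite !in_itv /= => /andP[? ?];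
  by split; [apply/andP; split | apply/eqP]; lra.
Qed.

(* [2 * ((b - a) / 2) `^ (p + 1) / (p + 1)] is [\int_a^b |x - (a + b) / 2|^p]. *)
Lemma trapezoid_error_le_young {f df Psi G : R -> R} {a b p q l : R} :
  a < b -> 0 < p -> 0 < q -> p^-1 + q^-1 = 1 -> 0 < l ->
  (forall x, x \in `]a, b[ -> is_derive x 1 f (df x)) -> {within `[a, b], continuous f} ->
  (forall x, x \in `]a, b[ -> is_derive x 1 Psi (G x)) -> {within `[a, b], continuous Psi} ->
  (forall x, x \in `]a, b[ -> `|df x| `^ q <= G x) ->
  `|(b - a) / 2 * (f a + f b) - \int[lebesgue_measure]_(x in `[a, b]) f x| <=
    l `^ p * (2 * ((b - a) / 2) `^ (p + 1) / (p + 1)) / p + (Psi b - Psi a) / (l `^ q * q).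
Proof.
move=> ab p0 q0 pq l0 fx cf Psix cPsi dfG; set c := (a + b) / 2.
have p10 : 0 < p + 1 by rewrite addr_gt0.
pose wp := l `^ p / (p * (p + 1)); pose wq := (l `^ q * q)^-1.
pose K x := wp * signpow (p + 1) (x - c) + wq * Psi x.
pose k x := wp * ((p + 1) * `|x - c| `^ p) + wq * G x.
have Kx x : x \in `]a, b[ -> x != c -> is_derive x 1 K (k x).
  move=> xab xc; have xc0 : x - c != 0 by rewrite subr_eq0.
  have hs : is_derive x 1 (fun y => signpow (p + 1) (y - c)) _ :=
    is_derive1_comp (is_derive_shift x 1 (- c)) (is_derive_signpow p0 xc0).
  have h : is_derive x 1 K _ := is_deriveD (is_deriveZ wp hs) (is_deriveZ wq (Psix x xab)).
  by apply: (is_derive_eq h); rewrite /GRing.scale /= mulr1.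
have cs : continuous (fun y => signpow (p + 1) (y - c)).
  move=> y; have csh : {for y, continuous (shift (- c))}.
    by apply/differentiable_continuous/derivable1_diffP; case: (is_derive_shift y 1 (- c)).
  exact: continuous_comp csh (continuous_signpow p10 _).
have cK : {within `[a, b], continuous K}.
  have hs : {within `[a, b], continuous (fun y => signpow (p + 1) (y - c))}.
    exact: continuous_subspaceT.
  move=> x; have h : {for x, continuous (K : subspace `[a, b] -> R)} :=
    continuousD (continuousZl_tmp (k := wp) (hs x)) (continuousZl_tmp (k := wq) (cPsi x)).
  exact: h.
have dfk x : x \in `]a, b[ -> x != c -> `|(x - c) * df x| <= k x.
  move=> xab _; rewrite normrM.
  apply: le_trans (conjugate_powR_scaled (normr_ge0 _) (normr_ge0 _) l0 p0 q0 pq (dfG x xab)) _.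
  rewrite /k /wp /wq le_eqVlt; apply/orP; left; apply/eqP.
  by field; rewrite !gt_eqF ?mulr_gt0 ?powR_gt0.
apply: le_trans (trapezoid_error_le ab fx cf Kx cK dfk) _.
have hL : 0 < (b - a) / 2 by rewrite divr_gt0 ?subr_gt0.
have sb : signpow (p + 1) (b - c) = ((b - a) / 2) `^ (p + 1).
  by rewrite signpowE // (_ : b - c = (b - a) / 2) ?gtr0_sg ?gtr0_norm ?mul1r // /c; field.
have sa : signpow (p + 1) (a - c) = - ((b - a) / 2) `^ (p + 1).
  rewrite signpowE // (_ : a - c = - ((b - a) / 2)); last by rewrite /c; field.
  by rewrite normrN gtr0_norm // sgrN gtr0_sg // mulN1r.
rewrite /K sb sa /wp /wq le_eqVlt; apply/orP; left; apply/eqP.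
by field; rewrite !gt_eqF ?mulr_gt0 ?powR_gt0.
Qed.

Lemma trapezoid_hoelder {f df Psi G : R -> R} {a b p q : R} :
  a < b -> 0 < p -> 0 < q -> p^-1 + q^-1 = 1 ->
  (forall x, x \in `]a, b[ -> is_derive x 1 f (df x)) -> {within `[a, b], continuous f} ->
  (forall x, x \in `]a, b[ -> is_derive x 1 Psi (G x)) -> {within `[a, b], continuous Psi} ->
  (forall x, x \in `]a, b[ -> `|df x| `^ q <= G x) ->
  `|(f a + f b) / 2 - (b - a)^-1 * \int[lebesgue_measure]_(x in `[a, b]) f x| <=
    (b - a) / (2 * (p + 1) `^ p^-1) * ((Psi b - Psi a) / (b - a)) `^ q^-1.
Proof.
move=> ab p0 q0 pq fx cf Psix cPsi dfG.
have L0 : 0 < b - a by rewrite subr_gt0.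
have P0 : 0 < 2 * ((b - a) / 2) `^ (p + 1) / (p + 1).
  have L20 : 0 < (b - a) / 2 by rewrite divr_gt0.
  have p10 : 0 < p + 1 by rewrite addr_gt0.
  by rewrite !mulr_gt0 ?invr_gt0 ?powR_gt0.
have Q0 : 0 <= Psi b - Psi a.
  rewrite subr_ge0; apply: (ger0_derive1_ndecr _ _ cPsi (lexx a) (ltW ab) (lexx b)) => x xab.
    by case: (Psix x xab).
  rewrite derive1E (@derive_val _ _ _ _ _ _ _ (Psix x xab)).
  exact: le_trans (powR_ge0 _ _) (dfG x xab).
pose E := (b - a) / 2 * (f a + f b) - \int[lebesgue_measure]_(x in `[a, b]) f x.
have hE : `|E| <= (2 * ((b - a) / 2) `^ (p + 1) / (p + 1)) `^ p^-1 * (Psi b - Psi a) `^ q^-1 :=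
  ler_young_inf p0 q0 pq P0 Q0
    (fun l l0 => trapezoid_error_le_young ab p0 q0 pq l0 fx cf Psix cPsi dfG).
have -> : (f a + f b) / 2 - (b - a)^-1 * \int[lebesgue_measure]_(x in `[a, b]) f x =
    E / (b - a) by rewrite /E; field; rewrite gt_eqF.
rewrite normrM normfV (gtr0_norm L0) ler_pdivrMr //; apply: le_trans hE _.
by rewrite (midpoint_hoelder_constant L0 Q0 p0 q0 pq).
Qed.

End trapezoid.

Section convexity.
Context {R : realType}.

Lemma segment_sub_interior {I : set R} {a b : R} :
  is_interval I -> I° a -> I° b -> `[a, b] `<=` I°.
Proof.
move=> iI Ia Ib x /=; rewrite in_itv /= => /andP[ax xb].
have [->|xna] := eqVneq x a; first exact: Ia.
have [->|xnb] := eqVneq x b; first exact: Ib.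
have sI : `]a, b[ `<=` I.
  move=> y /=; rewrite in_itv /= => /andP[ay yb].
  by apply: (iI a b (interior_subset Ia) (interior_subset Ib)); rewrite !ltW.
apply: (interiorS sI); rewrite interior_itv_bnd /= in_itv /=.
by rewrite !lt_neqAle eq_sym xna xnb ax xb.
Qed.

Lemma derivable_interior_segment {I : set R} {f : R -> R} {a b : R} :
  is_interval I -> (forall x, I° x -> derivable f x 1) -> I° a -> I° b ->
  (forall x, x \in `]a, b[ -> is_derive x 1 f (f^`()%classic x)) /\
  {within `[a, b], continuous f}.
Proof.
move=> iI fder Ia Ib; have sI := segment_sub_interior iI Ia Ib.
split=> [x xab|].
  rewrite derive1E; apply/derivableP/fder/sI.
  by move: xab; rewrite /= !in_itv /= => /andP[ax xb]; rewrite !ltW.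
apply: continuous_in_subspaceT => x /set_mem xab.
exact/differentiable_continuous/derivable1_diffP/fder/sI.
Qed.

Lemma s_alpha_m_convex_le {s alpha m : R} {D : set R} {g : R -> R} {a b x : R} :
  a < b -> s_alpha_m_convex s alpha m D g a b -> D (b / m) -> a <= x <= b ->
  g x <= m * g (b / m) + (g a - m * g (b / m)) * ((b - x) / (b - a)) `^ (alpha * s).
Proof.
move=> ab [_ gconv] Dbm /andP[ax xb]; set t := (b - x) / (b - a).
have L0 : 0 < b - a by rewrite subr_gt0.
have t01 : 0 <= t <= 1.
  apply/andP; split; first by rewrite divr_ge0 ?subr_ge0 // ltW.
  by rewrite ler_pdivrMr // mul1r lerD2l lerN2.
have aab : a <= a <= b by rewrite lexx (ltW ab).
have bab : a <= b <= b by rewrite lexx (ltW ab).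
have := gconv a b t aab bab Dbm t01.
rewrite (_ : t * a + (1 - t) * b = x); last by rewrite /t; field; rewrite gt_eqF.
by move/le_trans; apply; rewrite le_eqVlt; apply/orP; left; apply/eqP; ring.
Qed.

End convexity.

Theorem theorem2 (R : realType) (I : set R) (f : R -> R) (a b s alpha m p q : R) :
  is_interval I ->
  (forall x, interior I x -> derivable f x 1) ->
  interior I a -> interior I b -> a < b ->
  (@lebesgue_measure R).-integrable `[a, b] (EFin \o (derive1 f)) ->
  0 < s <= 1 -> 0 <= alpha <= 1 -> 0 < m <= 1 ->
  interior I (b / m) ->
  1 < p -> q = p / (p - 1) ->
  s_alpha_m_convex s alpha m (interior I) (fun x => `|(derive1 f) x| `^ q) a b ->
  `| (f a + f b) / 2 - (b - a)^-1 * \int[@lebesgue_measure R]_(x in `[a, b]) f x |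
    <= (b - a) / (2 * (p + 1) `^ p^-1) *
       ((`|(derive1 f) a| `^ q + m * alpha * s * `|(derive1 f) (b / m)| `^ q) / (alpha * s + 1))
         `^ q^-1.
Proof.
move=> iI fder Ia Ib ab _ /andP[s0 _] /andP[al0 _] /andP[m0 _] Ibm p1 qE fconv.
have p0 : 0 < p by rewrite (lt_trans ltr01).
have q0 : 0 < q by rewrite qE divr_gt0 // subr_gt0.
have pq : p^-1 + q^-1 = 1 by rewrite qE invf_div; field; rewrite gt_eqF.
have r0 : 0 <= alpha * s by rewrite mulr_ge0 // ltW.
have [fx cf] := derivable_interior_segment iI fder Ia Ib.
set A := `|f^`()%classic a| `^ q; set B := `|f^`()%classic (b / m)| `^ q.
pose Psi := envelope_primitive (m * B) (A - m * B) (alpha * s) a b.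
have Psix x : x \in `]a, b[ ->
    is_derive x 1 Psi (m * B + (A - m * B) * ((b - x) / (b - a)) `^ (alpha * s)).
  by move=> xab; apply: is_derive_envelope_primitive; rewrite ?(itvP xab).
have cPsi : {within `[a, b], continuous Psi}.
  exact/continuous_subspaceT/continuous_envelope_primitive.
have dfG x : x \in `]a, b[ ->
    `|f^`()%classic x| `^ q <= m * B + (A - m * B) * ((b - x) / (b - a)) `^ (alpha * s).
  by rewrite in_itv /= => /andP[ax xb]; apply: s_alpha_m_convex_le ab fconv Ibm _; rewrite !ltW.
have := trapezoid_hoelder ab p0 q0 pq fx cf Psix cPsi dfG.
rewrite envelope_primitive_increment //.
have -> : (b - a) * (m * B + (A - m * B) / (alpha * s + 1)) / (b - a) =
    (A + m * alpha * s * B) / (alpha * s + 1).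
  by field; rewrite !gt_eqF ?subr_gt0 ?ltr_wpDl.
by [].
Qed.
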